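(* Let $S$ be a finite set. The comma category $(k\downarrow *_S)$ is equivalent to the category $\mathrm I_S$ whose objects are connected graphs with set of outer flags equal to $S$, and whose morphisms $\Gamma\to\Gamma'$ are graph morphisms which are composites of isomorphisms and contractions of non-loop edges (i.e. spanning-forest contractions) and whose flag map restricts to the identity on $S$.
   Context: A graph $\Gamma=(F,V,\partial,\imath)$ consists of finite sets $F$ (flags) and $V$ (vertices), a map $\partial:F\to V$ and an involution $\imath$ of $F$; 2-element orbits of $\imath$ are edges, fixed points are outer flags. A graph morphism $\phi:\Gamma\to\Gamma'$ is a triple $(\phi_V,\phi^F,\imath_\phi)$ with $\phi_V:V\to V'$ surjective, $\phi^F:F'\to F$ injective and $\imath_\phi$ a fixed-point-free involution of $F\setminus\phi^F(F')$, such that $\phi_V\partial\phi^F=\partial'$, $\phi_V\partial(f)=\phi_V\partial(\imath_\phi f)$ for $f\notin\phi^F(F')$, each $f\notin\phi^F(F')$ either lies on an edge $\{f,\imath f\}$ with $\imath_\phi f=\imath f$ or $f,\imath_\phi f$ are outer flags, and $\imath\phi^F(f')=\phi^F\imath'(f')$ whenever $\phi^F(f')$ lies on an edge. The simple contraction of an edge $\{s,t\}$ with $\partial s\neq\partial t$ is (quotient $V\to V/(\partial s\sim\partial t)$, inclusion $F\setminus\{s,t\}\hookrightarrow F$, $\imath_\phi(s)=t$). An aggregate is a graph with $\imath=\mathrm{id}$; $*_S$ is the one-vertex aggregate with flags $S$. For distinct outer flags $s,t$ of an aggregate, the virtual edge (if $\partial s\ne\partial t$) resp. loop (if $\partial s=\partial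 t$) contraction is the morphism (quotient $V\to V/(\partial s\sim\partial t)$, inclusion $F\setminus\{s,t\}\hookrightarrow F$, $\imath_\phi(s)=t$). $\mathrm{Agg}^{\rm ctd}$: aggregates with morphisms generated by isomorphisms and virtual edge and loop contractions; $\mathrm{Agg}^{\rm forest}$: generated by isomorphisms and virtual edge contractions; $k$ the inclusion. The comma category $(k\downarrow *_S)$ has objects pairs $(X,\phi)$ with $X$ an aggregate and $\phi:X\to *_S$ in $\mathrm{Agg}^{\rm ctd}$, and morphisms $\psi:X\to X'$ in $\mathrm{Agg}^{\rm forest}$ with $\phi'\psi=\phi$. *)

From mathcomp Require Import all_boot.

Set Implicit Arguments.
Unset Strict Implicit.
Unset Printing Implicit Defensive.

Record graph := Graph {
  flag : finType;
  vert : finType;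
  bd : flag -> vert;
  inv : flag -> flag;
  inv_invol : involutive inv }.

Definition outer (G : graph) (f : flag G) : Prop := inv f = f.

Record gmor (G H : graph) := GMor {
  mV : vert G -> vert H;
  mF : flag H -> flag G;
  mI : flag G -> flag G }.          (* \imath_\phi, only meaningful off the image of \phi^F *)

Definition in_img (G H : graph) (phi : gmor G H) (f : flag G) : Prop :=
  exists f', mF phi f' = f.

Definition is_gmor (G H : graph) (phi : gmor G H) : Prop :=
  [/\ (forall v', exists v, mV phi v = v'),
      injective (mF phi),
      (forall f, ~ in_img phi f ->
          (~ in_img phi (mI phi f) /\ mI phi (mI phi f) = f /\ mI phi f <> f)),
      (forall f', mV phi (bd (mF phi f')) = bd f') &
   [/\ (forall f, ~ in_img phi f -> mV phi (bd f) = mV phi (bd (mI phi f))),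
      (forall f, ~ in_img phi f ->
          (inv f <> f /\ mI phi f = inv f) \/ (outer f /\ outer (mI phi f)))
    & (forall f', inv (mF phi f') <> mF phi f' ->
          inv (mF phi f') = mF phi (inv f'))]].

Definition mor_eq (G H : graph) (phi psi : gmor G H) : Prop :=
  [/\ mV phi =1 mV psi, mF phi =1 mF psi &
      forall f, ~ in_img phi f -> mI phi f = mI psi f].

Definition gid (G : graph) : gmor G G := GMor id id id.

Definition gcomp (G H K : graph) (psi : gmor H K) (phi : gmor G H) : gmor G K :=
  GMor (mV psi \o mV phi) (mF phi \o mF psi)
    (fun f => match [pick g | mF phi g == f] with
              | Some g => mF phi (mI psi g)
              | None => mI phi f
              end).

Definition is_iso (G H : graph) (phi : gmor G H) : Prop :=
  [/\ is_gmor phi, bijective (mV phi) & bijective (mF phi)].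

(* A morphism phi : G -> H is "the contraction along {s,t}, followed by an
   isomorphism": phi_V identifies exactly \partial s and \partial t, phi^F is a
   bijection onto F \ {s,t}, and \imath_\phi s = t. *)
Definition contraction_along (G H : graph) (phi : gmor G H) (s t : flag G) : Prop :=
  [/\ is_gmor phi, s <> t,
      (forall v w, mV phi v = mV phi w <->
         [\/ v = w, (v = bd s /\ w = bd t) | (v = bd t /\ w = bd s)]),
      (forall f, in_img phi f <-> (f <> s /\ f <> t))
    & mI phi s = t].

Definition edge_contraction (G H : graph) (phi : gmor G H) : Prop :=
  exists s t, [/\ inv s = t, bd s <> bd t & contraction_along phi s t].

Definition aggregate (G : graph) : Prop := forall f : flag G, inv f = f.

Definition star (S : finType) : graph :=
  @Graph S unit (fun _ => tt) id (fun _ => erefl).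

Definition virtual_edge_contraction (G H : graph) (phi : gmor G H) : Prop :=
  [/\ aggregate G, aggregate H &
      exists s t, bd s <> bd t /\ contraction_along phi s t].

Definition loop_contraction (G H : graph) (phi : gmor G H) : Prop :=
  [/\ aggregate G, aggregate H &
      exists s t, bd s = bd t /\ contraction_along phi s t].

Inductive generated (Ob : graph -> Prop)
    (P : forall G H : graph, gmor G H -> Prop) : forall G H : graph, gmor G H -> Prop :=
| gen_iso G H (phi : gmor G H) : Ob G -> Ob H -> is_iso phi -> generated Ob P phi
| gen_base G H (phi : gmor G H) : P G H phi -> generated Ob P phi
| gen_comp G H K (phi : gmor G H) (psi : gmor H K) :
    generated Ob P phi -> generated Ob P psi -> generated Ob P (gcomp psi phi)
| gen_eq G H (phi psi : gmor G H) :
    mor_eq phi psi -> generated Ob P phi -> generated Ob P psi.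

Definition agg_ctd (G H : graph) (phi : gmor G H) : Prop :=
  generated aggregate
    (fun G H phi => virtual_edge_contraction phi \/ loop_contraction phi) phi.

Definition agg_forest (G H : graph) (phi : gmor G H) : Prop :=
  generated aggregate (fun G H phi => virtual_edge_contraction phi) phi.

Definition forest_contr (G H : graph) (phi : gmor G H) : Prop :=
  generated (fun _ => True) (fun G H phi => edge_contraction phi) phi.

Definition adj (G : graph) : rel (vert G) :=
  fun v w => [exists f : flag G, [&& inv f != f, bd f == v & bd (inv f) == w]].

Definition connected_graph (G : graph) : Prop :=
  (exists v : vert G, True) /\ forall v w : vert G, connect (@adj G) v w.

Record precat := PreCat {
  ob : Type;
  arr : ob -> ob -> Type;
  ishom : forall a b, arr a b -> Prop;         (* which raw arrows are morphisms *)
  heq : forall a b, arr a b -> arr a b -> Prop;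
  cid : forall a, arr a a;
  ccomp : forall a b c, arr b c -> arr a b -> arr a c }.

Arguments ishom {_ _ _} _.
Arguments heq {_ _ _} _ _.
Arguments cid {_} _.
Arguments ccomp {_ _ _ _} _ _.

Record functor (C D : precat) := Functor {
  fob : ob C -> ob D;
  farr : forall a b, arr a b -> arr (fob a) (fob b) }.

Arguments farr {_ _} _ {_ _} _.

Definition is_functor (C D : precat) (F : functor C D) : Prop :=
  [/\ (forall a b (f : arr a b), ishom f -> ishom (farr F f)),
      (forall a b (f g : arr a b), ishom f -> ishom g -> heq f g ->
          heq (farr F f) (farr F g)),
      (forall a, heq (farr F (cid a)) (cid (fob F a)))
    & (forall a b c (f : arr a b) (g : arr b c), ishom f -> ishom g ->
          heq (farr F (ccomp g f)) (ccomp (farr F g) (farr F f)))].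

Definition id_functor (C : precat) : functor C C :=
  @Functor C C id (fun a b f => f).

Definition comp_functor (C D E : precat) (G : functor D E) (F : functor C D)
  : functor C E :=
  @Functor C E (fob G \o fob F) (fun a b f => farr G (farr F f)).

Definition nat_iso (C D : precat) (F G : functor C D) : Prop :=
  exists (al : forall a, arr (fob F a) (fob G a))
         (be : forall a, arr (fob G a) (fob F a)),
  [/\ (forall a, ishom (al a) /\ ishom (be a)),
      (forall a, heq (ccomp (be a) (al a)) (cid (fob F a))),
      (forall a, heq (ccomp (al a) (be a)) (cid (fob G a)))
    & (forall a b (f : arr a b), ishom f ->
          heq (ccomp (al b) (farr F f)) (ccomp (farr G f) (al a)))].

Definition cat_equivalent (C D : precat) : Prop :=
  exists (F : functor C D) (G : functor D C),
  [/\ is_functor F, is_functor G,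
      nat_iso (id_functor C) (comp_functor G F)
    & nat_iso (comp_functor F G) (id_functor D)].

Record comma_ob (S : finType) := CommaOb {
  cX : graph;
  cX_agg : aggregate cX;
  cphi : gmor cX (star S);
  cphi_ctd : agg_ctd cphi }.

Definition comma_hom (S : finType) (a b : comma_ob S) (psi : gmor (cX a) (cX b)) : Prop :=
  agg_forest psi /\ mor_eq (gcomp (cphi b) psi) (cphi a).

Definition comma_cat (S : finType) : precat :=
  @PreCat (comma_ob S) (fun a b => gmor (cX a) (cX b))
    (@comma_hom S) (fun a b => @mor_eq (cX a) (cX b))
    (fun a => gid (cX a)) (fun a b c g f => gcomp g f).

Record IS_ob (S : finType) := ISOb {
  iG : graph;
  iG_conn : connected_graph iG;
  ilab : S -> flag iG;
  ilab_inj : injective ilab;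
  ilab_outer : forall f, outer f <-> exists s, ilab s = f }.

Definition IS_hom (S : finType) (a b : IS_ob S) (phi : gmor (iG a) (iG b)) : Prop :=
  forest_contr phi /\ forall s, mF phi (ilab b s) = ilab a s.

Definition IS_cat (S : finType) : precat :=
  @PreCat (IS_ob S) (fun a b => gmor (iG a) (iG b))
    (@IS_hom S) (fun a b => @mor_eq (iG a) (iG b))
    (fun a => gid (iG a)) (fun a b c g f => gcomp g f).

(* Both categories carry the same data. A morphism phi : X -> *_S of aggregates
   determines a graph on the flags and vertices of X: the flags in the image of
   phi^F are the outer ones, and every other flag f forms an edge with
   imath_phi f. Since phi is a composite of virtual edge and loop contractions,
   any two vertices of X are linked by a chain of contracted pairs, so this graph
   is connected. Conversely, a connected graph with outer flags S is recovered
   from its underlying aggregate and the map to *_S pairing flags along edges,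
   which lies in Agg^ctd because the edges can be contracted one at a time.
   A virtual edge contraction compatible with the maps to *_S contracts a pair of
   flags forming a non-loop edge of the associated graph, so forest morphisms
   over *_S are exactly the spanning-forest contractions fixing S, and the unit
   and counit of the equivalence are identities. *)

From Pilot Require Import Defs.
From mathcomp Require Import all_boot.

Set Implicit Arguments.
Unset Strict Implicit.
Unset Printing Implicit Defensive.

(* all_boot exports a monoid inverse named [inv]. *)
Local Notation inv := Defs.inv.

Lemma pick_preim_Some (I : finType) (T : eqType) (h : I -> T) x y :
  injective h -> h x = y -> [pick z | h z == y] = Some x.
Proof.
move=> h_inj <-; case: pickP => [z /eqP /h_inj -> // | none].
by have := none x; rewrite eqxx.
Qed.

Lemma pick_preim_None (I : finType) (T : eqType) (h : I -> T) y :
  ~ (exists x, h x = y) -> [pick z | h z == y] = None.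
Proof. by move=> noy; case: pickP => // z /eqP hz; case: noy; exists z. Qed.

Lemma id_bijective (T : Type) : bijective (@id T).
Proof. by exists id. Qed.

Lemma homo_connect (T T' : finType) (e : rel T) (e' : rel T') (h : T -> T') :
  (forall x y, e x y -> h x = h y \/ e' (h x) (h y)) ->
  forall x y, connect e x y -> connect e' (h x) (h y).
Proof.
move=> he x y /connectP [p pth ->]; elim: p x pth => [|z p IHp] x /=.
  by rewrite connect0.
case/andP=> exz pz; apply: connect_trans (IHp z pz).
by case: (he _ _ exz) => [->|?]; [exact: connect0 | exact: connect1].
Qed.

Section Image.
Variables (G H : graph) (phi : gmor G H).

Definition in_imgb (f : flag G) : bool := [exists g, mF phi g == f].

Lemma in_imgP f : reflect (in_img phi f) (in_imgb f).
Proof. by apply: (iffP existsP) => [[g /eqP <-]|[g <-]]; exists g. Qed.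

End Image.

Section Composition.
Variables (G H K : graph) (phi : gmor G H) (psi : gmor H K).
Hypothesis mF_inj : injective (mF phi).

Lemma gcomp_mI_img g : mI (gcomp psi phi) (mF phi g) = mF phi (mI psi g).
Proof. by rewrite /= (pick_preim_Some mF_inj erefl). Qed.

Lemma gcomp_mI_notimg f : ~ in_img phi f -> mI (gcomp psi phi) f = mI phi f.
Proof. by move=> nf /=; rewrite pick_preim_None. Qed.

Lemma in_img_gcomp f : in_img (gcomp psi phi) f -> in_img phi f.
Proof. by case=> k <-; exists (mF psi k). Qed.

Lemma notin_img_gcompP f : ~ in_img (gcomp psi phi) f ->
  (~ in_img phi f /\ mI (gcomp psi phi) f = mI phi f) \/
  exists g, [/\ f = mF phi g, ~ in_img psi g & mI (gcomp psi phi) f = mF phi (mI psi g)].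
Proof.
move=> nf; have [/in_imgP [g Eg]|/in_imgP ni] := boolP (in_imgb phi f).
  right; exists g; split => //; last by rewrite -Eg gcomp_mI_img.
  by case=> k Ek; apply: nf; exists k; rewrite /= Ek.
by left; split => //; rewrite gcomp_mI_notimg.
Qed.

End Composition.

Lemma outer_mF (G H : graph) (phi : gmor G H) g :
  is_gmor phi -> outer g -> outer (mF phi g).
Proof.
case=> _ _ _ _ [_ _ mF_inv] og; rewrite /outer.
have [//|/eqP ne] := eqVneq (inv (mF phi g)) (mF phi g).
by rewrite (mF_inv g ne) og.
Qed.

Lemma outer_mF_inv (G H : graph) (phi : gmor G H) g :
  is_gmor phi -> outer (mF phi g) -> outer (mF phi (inv g)).
Proof.
case=> _ mF_inj _ _ [_ _ mF_inv] og; rewrite /outer.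
have [//|/eqP ne] := eqVneq (inv (mF phi (inv g))) (mF phi (inv g)).
have E := mF_inv _ ne; rewrite inv_invol in E.
have /mF_inj E2 : mF phi (inv g) = mF phi g by rewrite -og -E inv_invol.
by move: ne; rewrite E2 og.
Qed.

Lemma gcomp_is_gmor (G H K : graph) (phi : gmor G H) (psi : gmor H K) :
  is_gmor phi -> is_gmor psi -> is_gmor (gcomp psi phi).
Proof.
move=> gphi gpsi; have [mV_onto mF_inj mI_invol mV_bd [mI_bd mI_edge mF_inv]] := gphi.
have [mV_onto' mF_inj' mI_invol' mV_bd' [mI_bd' mI_edge' mF_inv']] := gpsi.
split.
- move=> k; have [y <-] := mV_onto' k; have [x <-] := mV_onto y; by exists x.
- exact: inj_comp mF_inj mF_inj'.
- move=> f /(notin_img_gcompP mF_inj) [[ni ->]|[g [-> ng ->]]].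
    have [ni2 [ii ne]] := mI_invol f ni.
    by split => //; [move/in_img_gcomp | rewrite gcomp_mI_notimg].
  have [ng2 [ii ne]] := mI_invol' g ng; split; [|split].
  + by case=> k /= /mF_inj Ek; apply: ng2; exists k.
  + by rewrite gcomp_mI_img // ii.
  + by move/mF_inj.
- by move=> k /=; rewrite mV_bd mV_bd'.
split.
- move=> f /(notin_img_gcompP mF_inj) [[ni ->]|[g [-> ng ->]]]; first by rewrite /= mI_bd.
  by rewrite /= !mV_bd mI_bd'.
- move=> f /(notin_img_gcompP mF_inj) [[ni ->]|[g [-> ng ->]]]; first exact: mI_edge.
  have [[ng1 ->]|[og om]] := mI_edge' g ng; last by right; split; apply: outer_mF.
  have [ofg|/eqP ne] := eqVneq (inv (mF phi g)) (mF phi g).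
    by right; split => //; apply: outer_mF_inv.
  by left; split => //; rewrite (mF_inv g ne).
- move=> k /= ne; have E := mF_inv (mF psi k) ne.
  have ne2 : inv (mF psi k) <> mF psi k by move=> E2; apply: ne; rewrite E E2.
  by rewrite E (mF_inv' k ne2).
Qed.

Section MorEq.
Variables (G H : graph).
Implicit Types phi psi chi : gmor G H.

Lemma mor_eq_in_img phi psi f : mor_eq phi psi -> in_img phi f <-> in_img psi f.
Proof. by case=> _ eF _; split; case=> g <-; exists g; rewrite eF. Qed.

Lemma mor_eq_refl phi : mor_eq phi phi.
Proof. by split. Qed.

Lemma mor_eq_sym phi psi : mor_eq phi psi -> mor_eq psi phi.
Proof.
move=> E; have [eV eF eI] := E; split => // f nf; symmetry; apply: eI.
by move/(mor_eq_in_img _ E).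
Qed.

Lemma mor_eq_trans phi psi chi : mor_eq phi psi -> mor_eq psi chi -> mor_eq phi chi.
Proof.
move=> E1 [eV' eF' eI']; have [eV eF eI] := E1; split.
- by move=> x; rewrite eV eV'.
- by move=> x; rewrite eF eF'.
- by move=> f nf; rewrite eI // eI' // => /(mor_eq_in_img _ E1).
Qed.

Lemma mor_eq_is_gmor phi psi : mor_eq phi psi -> is_gmor phi -> is_gmor psi.
Proof.
move=> E [mV_onto mF_inj mI_invol mV_bd [mI_bd mI_edge mF_inv]]; have [eV eF eI] := E.
have Ni f : ~ in_img psi f -> ~ in_img phi f by move=> nf /(mor_eq_in_img _ E).
have EI f : ~ in_img psi f -> mI psi f = mI phi f by move/Ni/eI.
split.
- by move=> v; have [x <-] := mV_onto v; exists x; rewrite eV.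
- exact: eq_inj mF_inj eF.
- move=> f nf; have [n2 [ii ne]] := mI_invol f (Ni f nf); rewrite EI //.
  have n3 : ~ in_img psi (mI phi f) by move/(mor_eq_in_img _ E).
  by split => //; rewrite EI.
- by move=> k; rewrite -eV -eF.
split.
- by move=> f nf; rewrite EI // -!eV; apply: mI_bd (Ni f nf).
- by move=> f nf; rewrite EI //; apply: mI_edge (Ni f nf).
- by move=> k; rewrite -!eF; apply: mF_inv.
Qed.

End MorEq.

Lemma gcomp_mor_eqr (G H K : graph) (phi phi' : gmor G H) (psi : gmor H K) :
  mor_eq phi phi' -> mor_eq (gcomp psi phi) (gcomp psi phi').
Proof.
move=> [eV eF eI]; split; [by move=> x /=; rewrite eV | by move=> x /=; rewrite eF |].
move=> f nf /=; rewrite (eq_pick (Q := fun g => mF phi' g == f)) => [|g]; last by rewrite eF.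
case: pickP => [g _|none]; first by rewrite eF.
by apply: eI => -[g Eg]; have := none g; rewrite -eF Eg eqxx.
Qed.

Lemma gcompA_mor_eq (G H K L : graph) (phi1 : gmor G H) (phi2 : gmor H K) (phi3 : gmor K L) :
  injective (mF phi1) -> injective (mF phi2) ->
  mor_eq (gcomp phi3 (gcomp phi2 phi1)) (gcomp (gcomp phi3 phi2) phi1).
Proof.
move=> i1 i2; have i12 : injective (mF (gcomp phi2 phi1)) by apply: inj_comp.
split => // f nf.
have [/in_imgP [h <-]|/in_imgP nh] := boolP (in_imgb phi1 f); last first.
  by rewrite gcomp_mI_notimg; [rewrite !gcomp_mI_notimg | move/in_img_gcomp].
rewrite [RHS](gcomp_mI_img _ i1).
have [/in_imgP [g <-]|/in_imgP ng] := boolP (in_imgb phi2 h).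
  by rewrite (gcomp_mI_img _ i2) (gcomp_mI_img phi3 i12 g).
rewrite [in RHS](gcomp_mI_notimg _ ng) (gcomp_mI_notimg phi3 (phi := gcomp phi2 phi1)).
  by rewrite gcomp_mI_img.
by case=> g /= /i1 Eg; apply: ng; exists g.
Qed.

Lemma generated_is_gmor Ob (P : forall G H : graph, gmor G H -> Prop) :
  (forall G H (phi : gmor G H), P G H phi -> is_gmor phi) ->
  forall G H (phi : gmor G H), generated Ob P phi -> is_gmor phi.
Proof.
move=> HP G H phi; elim => {G H phi}.
- by move=> G H phi _ _ [].
- by move=> G H phi /HP.
- by move=> G H K phi psi _ gphi _ gpsi; apply: gcomp_is_gmor.
- by move=> G H phi psi E _; apply: mor_eq_is_gmor E.
Qed.

Lemma virtual_edge_is_gmor (G H : graph) (phi : gmor G H) :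
  virtual_edge_contraction phi -> is_gmor phi.
Proof. by case=> _ _ [s [t [_ []]]]. Qed.

Lemma contraction_generator (G H : graph) (phi : gmor G H) :
  virtual_edge_contraction phi \/ loop_contraction phi ->
  exists s t, contraction_along phi s t.
Proof. by case=> [[_ _ [s [t [_ C]]]]|[_ _ [s [t [_ C]]]]]; exists s, t. Qed.

Lemma agg_ctd_is_gmor (G H : graph) (phi : gmor G H) : agg_ctd phi -> is_gmor phi.
Proof. by apply: generated_is_gmor => G' H' phi' /contraction_generator [s [t []]]. Qed.

Lemma forest_contr_is_gmor (G H : graph) (phi : gmor G H) : forest_contr phi -> is_gmor phi.
Proof. by apply: generated_is_gmor => G' H' phi' [s [t [_ _ []]]]. Qed.

Lemma bij_gmor_is_iso (G H : graph) (psi : gmor G H) :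
  bijective (mV psi) -> bijective (mF psi) ->
  (forall f', mV psi (bd (mF psi f')) = bd f') ->
  (forall f', inv (mF psi f') <> mF psi f' -> inv (mF psi f') = mF psi (inv f')) ->
  is_iso psi.
Proof.
move=> bV bF mV_bd mF_inv; have [g _ gK] := bF.
have all_img f : in_img psi f by exists (g f); rewrite gK.
split=> //; split.
- by move=> v; have [h _ hK] := bV; exists (h v); rewrite hK.
- exact: bij_inj.
- by move=> f /(_ (all_img f)).
- exact: mV_bd.
- by split=> // f /(_ (all_img f)).
Qed.

Definition contracted_rel (G H : graph) (phi : gmor G H) : rel (vert G) :=
  fun v w => [exists f, [&& ~~ in_imgb phi f, bd f == v & bd (mI phi f) == w]].

Definition fibre_connected (G H : graph) (phi : gmor G H) : Prop :=
  forall v w, mV phi v = mV phi w -> connect (contracted_rel phi) v w.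

Lemma contracted_rel_notimg (G H : graph) (phi : gmor G H) f :
  ~ in_img phi f -> contracted_rel phi (bd f) (bd (mI phi f)).
Proof.
by move=> nf; apply/existsP; exists f; rewrite !eqxx !andbT; apply/negP => /in_imgP.
Qed.

Lemma contraction_fibre_connected (G H : graph) (phi : gmor G H) s t :
  contraction_along phi s t -> fibre_connected phi.
Proof.
case=> gphi _ eV eimg ms v w /eV.
have ns : ~ in_img phi s by move/eimg => [].
have mt : mI phi t = s.
  by case: gphi => _ _ mI_invol _ _; case: (mI_invol s ns) => _ []; rewrite ms.
case=> [->|[-> ->]|[-> ->]]; first exact: connect0.
  by apply: connect1; rewrite -ms; apply: contracted_rel_notimg.
apply: connect1; rewrite -mt; apply: contracted_rel_notimg.
by move/eimg => [].
Qed.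

Lemma gcomp_fibre_connected (G H K : graph) (phi : gmor G H) (psi : gmor H K) :
  is_gmor phi -> fibre_connected phi -> fibre_connected psi ->
  fibre_connected (gcomp psi phi).
Proof.
move=> [_ mF_inj _ mV_bd _] cphi cpsi v w /cpsi /connectP [p pth Ep].
have lift_phi x y : contracted_rel phi x y -> contracted_rel (gcomp psi phi) x y.
  case/existsP=> f /and3P [/in_imgP nf /eqP <- /eqP <-].
  by rewrite -(gcomp_mI_notimg psi nf); apply/contracted_rel_notimg => /in_img_gcomp.
have fibre x y : mV phi x = mV phi y -> connect (contracted_rel (gcomp psi phi)) x y.
  by move/cphi; apply: connect_sub => a b /lift_phi /connect1.
have lift_psi y y' : contracted_rel psi y y' -> exists x x',
    [/\ mV phi x = y, mV phi x' = y' & contracted_rel (gcomp psi phi) x x'].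
  case/existsP=> g /and3P [/in_imgP ng /eqP <- /eqP <-].
  exists (bd (mF phi g)), (bd (mF phi (mI psi g))); rewrite !mV_bd; split => //.
  rewrite -gcomp_mI_img //; apply: contracted_rel_notimg.
  by case=> k /= /mF_inj Ek; apply: ng; exists k.
suff reach y0 : path (contracted_rel psi) y0 p ->
    (forall x, mV phi x = y0 -> connect (contracted_rel (gcomp psi phi)) v x) ->
    forall x, mV phi x = last y0 p -> connect (contracted_rel (gcomp psi phi)) v x.
  by apply: (reach _ pth _ w Ep) => x /esym; apply: fibre.
elim: p y0 {pth Ep} => [|z p IHp] y0 //= /andP [/lift_psi [x [x' [<- ex' rx]]] pz] reach0.
apply: IHp pz _ => x'' ex''.
apply: connect_trans (reach0 _ erefl) (connect_trans (connect1 rx) (fibre _ _ _)).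
by rewrite ex' ex''.
Qed.

Lemma mor_eq_fibre_connected (G H : graph) (phi psi : gmor G H) :
  mor_eq phi psi -> fibre_connected phi -> fibre_connected psi.
Proof.
move=> E cphi v w; have [eV _ eI] := E; rewrite -!eV => /cphi.
apply: connect_sub => a b /existsP [f /and3P [/in_imgP nf ba bb]].
apply: connect1; rewrite -(eqP ba) -(eqP bb) eI //; apply: contracted_rel_notimg.
by move/(mor_eq_in_img _ (mor_eq_sym E)).
Qed.

Lemma generated_fibre_connected Ob (P : forall G H : graph, gmor G H -> Prop) :
  (forall G H (phi : gmor G H), P G H phi -> exists s t, contraction_along phi s t) ->
  forall G H (phi : gmor G H), generated Ob P phi -> fibre_connected phi.
Proof.
move=> HP G H phi gphi; elim: gphi => {G H phi}.
- move=> G H phi _ _ [_ [g gK _] _] v w E.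
  by rewrite -(gK v) E gK connect0.
- by move=> G H phi /HP [s [t /contraction_fibre_connected]].
- move=> G H K phi psi gphi cphi _ cpsi; apply: gcomp_fibre_connected => //.
  by apply: generated_is_gmor gphi => G' H' phi' /HP [s [t []]].
- by move=> G H phi psi E _; apply: mor_eq_fibre_connected.
Qed.

Section Glue.
Variables (X Z : graph) (phi : gmor X Z).

Definition glue_inv (f : flag X) : flag X := if in_imgb phi f then f else mI phi f.

Lemma glue_inv_img f : in_img phi f -> glue_inv f = f.
Proof. by move=> fi; rewrite /glue_inv; case: in_imgP. Qed.

Lemma glue_inv_notimg f : ~ in_img phi f -> glue_inv f = mI phi f.
Proof. by move=> nf; rewrite /glue_inv; case: in_imgP. Qed.

Hypothesis gphi : is_gmor phi.

Lemma glue_inv_invol : involutive glue_inv.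
Proof.
move=> f; have [_ _ mI_invol _ _] := gphi.
have [fi|nf] := boolP (in_imgb phi f); first by rewrite !glue_inv_img //; apply/in_imgP.
move/in_imgP: nf => nf; have [n2 [ii _]] := mI_invol f nf.
by rewrite glue_inv_notimg // glue_inv_notimg.
Qed.

Definition glue : graph := @Graph (flag X) (vert X) (@bd X) glue_inv glue_inv_invol.

Lemma outer_glue (f : flag glue) : outer f <-> in_img phi f.
Proof.
have [_ _ mI_invol _ _] := gphi; rewrite /outer /=; split; last exact: glue_inv_img.
have [/in_imgP //|/in_imgP nf] := boolP (in_imgb phi f).
by rewrite glue_inv_notimg // => E; case: (mI_invol f nf) => _ [].
Qed.

Lemma connected_glue (z0 : vert Z) : (forall z, z = z0) ->
  fibre_connected phi -> connected_graph glue.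
Proof.
have [mV_onto _ mI_invol _ _] := gphi => single cphi.
split; first by have [v0 _] := mV_onto z0; exists v0.
move=> v w; apply: connect_sub (cphi v w _) => [x y|]; last by rewrite [LHS]single [RHS]single.
case/existsP=> f /and3P [/in_imgP nf /eqP <- /eqP <-]; apply: connect1; apply/existsP.
exists f; rewrite /= glue_inv_notimg // !eqxx !andbT; apply/eqP.
by case: (mI_invol f nf) => _ [].
Qed.

End Glue.

Definition glue_mor (X Y Z : graph) (phiX : gmor X Z) (phiY : gmor Y Z)
    (gX : is_gmor phiX) (gY : is_gmor phiY) (psi : gmor X Y) : gmor (glue gX) (glue gY) :=
  @GMor (glue gX) (glue gY) (mV psi) (mF psi) (mI psi).

Lemma glue_mor_is_gmor (X Y Z : graph) (phiX : gmor X Z) (phiY : gmor Y Z)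
    (gX : is_gmor phiX) (gY : is_gmor phiY) (psi : gmor X Y) :
  is_gmor psi -> mor_eq (gcomp phiY psi) phiX -> is_gmor (glue_mor gX gY psi).
Proof.
move=> [mV_onto mF_inj mI_invol mV_bd [mI_bd mI_edge mF_inv]] E; have [_ _ eI] := E.
split => //; split => // [f nf|k /=].
  left; rewrite /= glue_inv_notimg; last by move/(mor_eq_in_img _ (mor_eq_sym E))/in_img_gcomp.
  rewrite -eI; last by move/in_img_gcomp.
  by rewrite gcomp_mI_notimg //; split => //; case: (mI_invol f nf) => _ [].
have [/in_imgP ki|/in_imgP nk] := boolP (in_imgb phiY k).
  by rewrite glue_inv_img //; case: ki => j <-; apply/(mor_eq_in_img _ E); exists j.
have nk2 : ~ in_img phiX (mF psi k).
  by move/(mor_eq_in_img _ (mor_eq_sym E)) => [j /= /mF_inj Ej]; apply: nk; exists j.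
by move=> _; rewrite glue_inv_notimg // -eI ?gcomp_mI_img ?glue_inv_notimg //;
  apply/(mor_eq_in_img _ (mor_eq_sym E)).
Qed.

Lemma agg_forest_glue (X Y : graph) (psi : gmor X Y) : agg_forest psi ->
  forall (Z : graph) (phiX : gmor X Z) (phiY : gmor Y Z)
    (gX : is_gmor phiX) (gY : is_gmor phiY),
  mor_eq (gcomp phiY psi) phiX -> forest_contr (glue_mor gX gY psi).
Proof.
elim => {X Y psi}.
- move=> X Y psi _ _ [gpsi bV bF] Z phiX phiY gX gY E.
  by apply: gen_iso => //; split => //; apply: glue_mor_is_gmor.
- move=> X Y psi [_ _ [s [t [bst C]]]] Z phiX phiY gX gY E.
  have [gpsi st eV eimg ms] := C; have [_ _ eI] := E.
  have ns : ~ in_img psi s by move/eimg => [].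
  apply: gen_base; exists s, t; split => //; last by split => //; apply: glue_mor_is_gmor.
  rewrite /= glue_inv_notimg; last by move/(mor_eq_in_img _ (mor_eq_sym E))/in_img_gcomp.
  by rewrite -eI ?gcomp_mI_notimg // => /in_img_gcomp.
- move=> X Y W p1 p2 g1 IH1 g2 IH2 Z phiX phiY gX gY E.
  have [_ i1 _ _ _] := generated_is_gmor (@virtual_edge_is_gmor) g1.
  have [_ i2 _ _ _] := generated_is_gmor (@virtual_edge_is_gmor) g2.
  have g2Y := gcomp_is_gmor (generated_is_gmor (@virtual_edge_is_gmor) g2) gY.
  have E1 := mor_eq_trans (mor_eq_sym (gcompA_mor_eq phiY i1 i2)) E.
  apply: gen_eq (gen_comp (IH1 _ _ _ gX g2Y E1) (IH2 _ _ _ g2Y gY (mor_eq_refl _))).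
  by split.
- move=> X Y p p' E _ IH Z phiX phiY gX gY E2.
  have [eV eF eI] := E.
  apply: gen_eq (IH _ _ _ gX gY (mor_eq_trans (gcomp_mor_eqr phiY E) E2)).
  by split.
Qed.

Definition forget_edges (G : graph) : graph :=
  @Graph (flag G) (vert G) (@bd G) id (fun _ => erefl).

Definition forget_mor (G H : graph) (psi : gmor G H) :
    gmor (forget_edges G) (forget_edges H) :=
  @GMor (forget_edges G) (forget_edges H) (mV psi) (mF psi) (mI psi).

Lemma forget_mor_is_gmor (G H : graph) (psi : gmor G H) :
  is_gmor psi -> is_gmor (forget_mor psi).
Proof.
by case=> mV_onto mF_inj mI_invol mV_bd [mI_bd _ _]; split => //; split => // f _; right.
Qed.

Lemma agg_forest_forget (G H : graph) (psi : gmor G H) :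
  forest_contr psi -> agg_forest (forget_mor psi).
Proof.
elim => {G H psi}.
- move=> G H psi _ _ [gpsi bV bF].
  by apply: gen_iso => //; split => //; apply: forget_mor_is_gmor.
- move=> G H psi [s [t [_ bst [gpsi st eV eimg ms]]]]; apply: gen_base.
  split => //; exists s, t; split => //; split => //; exact: forget_mor_is_gmor.
- by move=> G H K p1 p2 _ IH1 _ IH2; apply: gen_comp IH1 IH2.
- by move=> G H p p' [eV eF eI] _ IH; apply: gen_eq IH; split.
Qed.

Section ContractEdge.
Variables (G : graph) (s : flag G).

Definition off_edge (f : flag G) : bool := (f != s) && (f != inv s).

(* The vertex bd (inv s) is merged into bd s, unless the edge is a loop. *)
Definition kept_vert (v : vert G) : bool := (v != bd (inv s)) || (bd s == bd (inv s)).

Definition cflag : finType := {f : flag G | off_edge f}.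
Definition cvert : finType := {v : vert G | kept_vert v}.

Lemma kept_bd : kept_vert (bd s).
Proof. by rewrite /kept_vert orbC orbN. Qed.

Definition merge_vert (v : vert G) := if v == bd (inv s) then bd s else v.

Definition contract_vert (v : vert G) : cvert :=
  insubd (exist _ (bd s) kept_bd : cvert) (merge_vert v).

Lemma val_contract_vert v : val (contract_vert v) = merge_vert v.
Proof.
rewrite val_insubd /merge_vert; have [_|ne] := eqVneq v (bd (inv s)).
  by rewrite kept_bd.
by rewrite /kept_vert ne.
Qed.

Lemma contract_vert_val (v : cvert) : contract_vert (val v) = v.
Proof.
apply: val_inj; rewrite val_contract_vert /merge_vert; case: eqP => // E.
by have := valP v; rewrite /kept_vert E eqxx /= => /eqP.
Qed.

Lemma contract_vert_eq v w : contract_vert v = contract_vert w <->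
  [\/ v = w, (v = bd s /\ w = bd (inv s)) | (v = bd (inv s) /\ w = bd s)].
Proof.
split; last first.
  have ms : merge_vert (bd s) = bd s by rewrite /merge_vert; case: ifP => // /eqP.
  have mt : merge_vert (bd (inv s)) = bd s by rewrite /merge_vert eqxx.
  by case=> [->|[-> ->]|[-> ->]] //; apply: val_inj; rewrite !val_contract_vert ms mt.
move/(congr1 val); rewrite !val_contract_vert /merge_vert.
case: (eqVneq v (bd (inv s))) => [->|_]; case: (eqVneq w (bd (inv s))) => [->|_] /=.
- by move=> _; apply: Or31.
- by move=> E; apply: Or33.
- by move=> E; apply: Or32.
- by move=> E; apply: Or31.
Qed.

Lemma off_edge_inv f : off_edge f -> off_edge (inv f).
Proof.
case/andP=> /eqP fs /eqP fis; apply/andP; split; apply/eqP => E.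
  by apply: fis; rewrite -E inv_invol.
by apply: fs; rewrite -[f]inv_invol E inv_invol.
Qed.

Definition contract_inv (f : cflag) : cflag := insubd f (inv (val f)).

Lemma val_contract_inv f : val (contract_inv f) = inv (val f).
Proof. by rewrite val_insubd off_edge_inv // (valP f). Qed.

Lemma contract_inv_invol : involutive contract_inv.
Proof. by move=> f; apply: val_inj; rewrite !val_contract_inv inv_invol. Qed.

Definition contract_edge : graph :=
  @Graph cflag cvert (fun f => contract_vert (bd (val f))) contract_inv contract_inv_invol.

Definition contract_map : gmor (forget_edges G) (forget_edges contract_edge) :=
  @GMor (forget_edges G) (forget_edges contract_edge) contract_vert val (@inv G).

Lemma in_img_contract_map f : in_img contract_map f <-> off_edge f.
Proof. by split => [[f' <-]|fo]; [exact: (valP f') | exists (exist _ f fo)]. Qed.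

Lemma card_contract_edge : #|flag contract_edge| < #|flag G|.
Proof.
rewrite card_sig; apply: proper_card; apply/properP; split; first exact/subsetP.
by exists s => //; rewrite inE /off_edge eqxx.
Qed.

Lemma on_edge f : ~~ off_edge f -> f = s \/ f = inv s.
Proof. by rewrite negb_and !negbK => /orP [/eqP|/eqP]; [left|right]. Qed.

Hypothesis s_edge : inv s != s.

Lemma contract_map_contraction : contraction_along contract_map s (inv s).
Proof.
have s_ne : s <> inv s by move=> E; move: s_edge; rewrite -E eqxx.
have nimg f : ~ in_img contract_map f <-> ~~ off_edge f.
  split=> [nf|/negP fe /in_img_contract_map //].
  by apply/negP => /in_img_contract_map.
split => //.
- split => //.
  + by move=> v'; exists (val v'); apply: contract_vert_val.
  + exact: val_inj.
  + move=> f /nimg fe; split.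
      by apply/nimg; apply: contraNN fe => /off_edge_inv; rewrite inv_invol.
    split; first exact: (@inv_invol G f).
    by case: (on_edge fe) => -> /=; rewrite ?inv_invol // => /esym.
  + split; [|by move=> f _; right|by move=> k /= []].
    move=> f /nimg /on_edge [->|->] /=; apply/contract_vert_eq; first exact: Or32.
    by rewrite inv_invol; apply: Or33.
- exact: contract_vert_eq.
- move=> f; split=> [/in_img_contract_map /andP [/eqP ? /eqP ?] //|[fs fis]].
  by apply/in_img_contract_map; apply/andP; split; apply/eqP.
Qed.

Lemma connected_contract_edge : connected_graph G -> connected_graph contract_edge.
Proof.
case=> [[v0 _] conn]; split; first by exists (contract_vert v0).
move=> v' w'; rewrite -(contract_vert_val v') -(contract_vert_val w').
apply: (homo_connect _ (conn (val v') (val w'))) => v w.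
case/existsP => f /and3P [nf /eqP bv /eqP bw].
have [fo|fe] := boolP (off_edge f).
  right; apply/existsP; exists (exist _ f fo); apply/and3P; split.
  - apply/eqP => /(congr1 val); rewrite val_contract_inv /= => E.
    by rewrite E eqxx in nf.
  - by rewrite /= bv.
  - by rewrite /= val_contract_inv bw.
left; apply/contract_vert_eq; case: (on_edge fe) => Ef; subst f.
  by apply: Or32.
by apply: Or33; rewrite inv_invol in bw.
Qed.

End ContractEdge.

Section Pairing.
Variable S : finType.

Definition outer_labelling (G : graph) (lab : S -> flag G) : Prop :=
  injective lab /\ forall f, outer f <-> exists x, lab x = f.

Definition pairing (G : graph) (lab : S -> flag G) : gmor (forget_edges G) (star S) :=
  @GMor (forget_edges G) (star S) (fun _ => tt) lab (@inv G).

Lemma edgeless_pairing_iso (G : graph) (lab : S -> flag G) :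
  outer_labelling lab -> connected_graph G -> (forall f : flag G, outer f) ->
  is_iso (pairing lab).
Proof.
move=> [lab_inj lab_outer] [[v0 _] conn] edgeless.
have lab_onto f : exists x, lab x = f by apply/lab_outer.
have single (v : vert G) : v = v0.
  have /connectP [[|w p] /= pth ->] := conn v0 v => //.
  by case/andP: pth => /existsP [f /and3P [+ _ _]]; rewrite edgeless eqxx.
split.
- have all_img f : in_img (pairing lab) f by apply: lab_onto.
  split; [by case; exists v0 | exact: lab_inj | by move=> f /(_ (all_img f)) | by [] |].
  by split; [move=> f /(_ (all_img f)) | move=> f _; right | move=> k /= []].
- by exists (fun _ => v0) => [v|[]] //; rewrite single.
- apply: (inj_card_bij lab_inj); rewrite -(card_codom lab_inj).
  by apply/subset_leq_card/subsetP => f _; have [x <-] := lab_onto f; apply: codom_f.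
Qed.

Lemma off_edge_outer (G : graph) (s f : flag G) : inv s != s -> outer f -> off_edge s f.
Proof.
move=> s_edge fo; apply/andP; split; apply/eqP => E; move: s_edge.
  by rewrite -E fo eqxx.
by rewrite -{2}(inv_invol s) -E fo E eqxx.
Qed.

Definition contract_lab (G : graph) (s : flag G) (lab : S -> flag G)
    (lab_off : forall x, off_edge s (lab x)) : S -> flag (contract_edge s) :=
  fun x => exist _ (lab x) (lab_off x).

Lemma outer_labelling_contract (G : graph) (s : flag G) (lab : S -> flag G)
    (lab_off : forall x, off_edge s (lab x)) :
  outer_labelling lab -> outer_labelling (contract_lab lab_off).
Proof.
move=> [lab_inj lab_outer]; split=> [x y /(congr1 val) /lab_inj //|f].
rewrite /outer; split.
  move/(congr1 val); rewrite val_contract_inv => /lab_outer [x Ex].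
  by exists x; apply: val_inj.
by case=> x <-; apply: val_inj; rewrite val_contract_inv; apply/lab_outer; exists x.
Qed.

Lemma agg_ctd_pairing_lt n (G : graph) (lab : S -> flag G) : #|flag G| < n ->
  outer_labelling lab -> connected_graph G -> agg_ctd (pairing lab).
Proof.
elim: n G lab => // n IHn G lab card_G Hlab conn.
have [/existsP [s s_edge]|/existsPn edgeless] := boolP [exists s : flag G, inv s != s].
  have lab_off x : off_edge s (lab x).
    by apply: off_edge_outer => //; apply/Hlab.2; exists x.
  have IH := IHn _ _ (leq_trans (card_contract_edge s) card_G)
    (outer_labelling_contract lab_off Hlab) (connected_contract_edge s conn).
  have contr : virtual_edge_contraction (contract_map s) \/ loop_contraction (contract_map s).
    have s_contr := contract_map_contraction s_edge.
    have [E|/eqP E] := eqVneq (bd s) (bd (inv s)); [right | left];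
      by split => //; exists s, (inv s).
  apply: gen_eq (gen_comp (gen_base _ contr) IH); split => // f _ /=.
  by case: pickP => [g /eqP <-|] //=; rewrite val_contract_inv.
apply: gen_iso => //; apply: edgeless_pairing_iso => // f.
by apply/eqP; rewrite -[_ == _]negbK edgeless.
Qed.

End Pairing.

Section Equivalence.
Variable S : finType.

Definition comma_is_gmor (a : comma_ob S) : is_gmor (cphi a) :=
  agg_ctd_is_gmor (cphi_ctd a).

Lemma connected_glue_comma (a : comma_ob S) : connected_graph (glue (comma_is_gmor a)).
Proof.
apply: (connected_glue (comma_is_gmor a) (z0 := tt)); first by case.
exact: generated_fibre_connected contraction_generator _ _ _ (cphi_ctd a).
Qed.

Lemma comma_mF_inj (a : comma_ob S) : injective (mF (cphi a)).
Proof. by case: (comma_is_gmor a). Qed.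

Definition glue_ob (a : comma_ob S) : IS_ob S :=
  @ISOb S (glue (comma_is_gmor a)) (connected_glue_comma a) (mF (cphi a))
    (@comma_mF_inj a) (@outer_glue _ _ _ (comma_is_gmor a)).

Definition glue_functor : functor (comma_cat S) (IS_cat S) :=
  @Functor (comma_cat S) (IS_cat S) glue_ob
    (fun a b psi => glue_mor (comma_is_gmor a) (comma_is_gmor b) psi).

Lemma glue_functor_is_functor : is_functor glue_functor.
Proof.
by split=> // a b psi [fpsi E]; split; [exact: agg_forest_glue | case: E].
Qed.

Lemma outer_labelling_IS (a : IS_ob S) : outer_labelling (ilab a).
Proof. by split; [apply: ilab_inj | apply: ilab_outer]. Qed.

Definition forget_ob (a : IS_ob S) : comma_ob S :=
  @CommaOb S (forget_edges (iG a)) (fun _ => erefl) (pairing (ilab a))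
    (agg_ctd_pairing_lt (ltnSn _) (outer_labelling_IS a) (iG_conn a)).

Definition forget_functor : functor (IS_cat S) (comma_cat S) :=
  @Functor (IS_cat S) (comma_cat S) forget_ob (fun a b psi => forget_mor psi).

Lemma forget_mor_comma_hom (a b : IS_ob S) (psi : gmor (iG a) (iG b)) :
  IS_hom psi -> comma_hom (a := forget_ob a) (b := forget_ob b) (forget_mor psi).
Proof.
move=> [fpsi lab]; split; first exact: agg_forest_forget.
have [_ mF_inj _ _ [_ mI_edge mF_inv]] := forest_contr_is_gmor fpsi.
split=> // f nf; have f_inner : ~ @outer (iG a) f.
  by move/(ilab_outer f) => [x Ex]; apply: nf; exists x; rewrite /= lab.
case: (notin_img_gcompP (phi := forget_mor psi) mF_inj nf) => [[ni ->]|[g [Ef _ ->]]] /=.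
  by have [[_ ->]|[]] := mI_edge f ni.
by move: f_inner; rewrite Ef => /mF_inv /esym.
Qed.

Lemma forget_functor_is_functor : is_functor forget_functor.
Proof. by split=> // a b psi; apply: forget_mor_comma_hom. Qed.

Definition unit_mor (a : comma_ob S) : gmor (cX a) (cX (forget_ob (glue_ob a))) :=
  @GMor (cX a) (cX (forget_ob (glue_ob a))) id id id.

Definition unit_inv (a : comma_ob S) : gmor (cX (forget_ob (glue_ob a))) (cX a) :=
  @GMor (cX (forget_ob (glue_ob a))) (cX a) id id id.

Definition counit_mor (a : IS_ob S) : gmor (iG (glue_ob (forget_ob a))) (iG a) :=
  @GMor (iG (glue_ob (forget_ob a))) (iG a) id id id.

Definition counit_inv (a : IS_ob S) : gmor (iG a) (iG (glue_ob (forget_ob a))) :=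
  @GMor (iG a) (iG (glue_ob (forget_ob a))) id id id.

Lemma unit_mor_comma_hom (a : comma_ob S) :
  comma_hom (a := a) (b := forget_ob (glue_ob a)) (unit_mor a).
Proof.
split.
  apply: gen_iso; [exact: cX_agg | by [] |].
  apply: bij_gmor_is_iso => //; try exact: id_bijective.
  by move=> k /= []; apply: cX_agg.
split=> [x|//|f nf]; first by case: (mV (cphi a) x).
by rewrite (gcomp_mI_img (phi := unit_mor a) _ (@inj_id _)) /= glue_inv_notimg.
Qed.

Lemma unit_inv_comma_hom (a : comma_ob S) :
  comma_hom (a := forget_ob (glue_ob a)) (b := a) (unit_inv a).
Proof.
split.
  apply: gen_iso; [by [] | exact: cX_agg |].
  by apply: bij_gmor_is_iso => //; exact: id_bijective.
split=> [x|//|f nf]; first by case: (mV (cphi a) x).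
by rewrite (gcomp_mI_img (phi := unit_inv a) _ (@inj_id _)) /= glue_inv_notimg.
Qed.

Lemma glue_inv_pairing (a : IS_ob S) (f : flag (iG a)) :
  glue_inv (pairing (ilab a)) f = inv f.
Proof.
rewrite /glue_inv; case: in_imgP => // -[x <-].
by symmetry; apply/(ilab_outer (ilab a x)); exists x.
Qed.

Lemma counit_mor_IS_hom (a : IS_ob S) :
  IS_hom (a := glue_ob (forget_ob a)) (b := a) (counit_mor a).
Proof.
split=> //; apply: gen_iso => //.
apply: bij_gmor_is_iso => //; try exact: id_bijective.
by move=> k /= _; rewrite glue_inv_pairing.
Qed.

Lemma counit_inv_IS_hom (a : IS_ob S) :
  IS_hom (a := a) (b := glue_ob (forget_ob a)) (counit_inv a).
Proof.
split=> //; apply: gen_iso => //.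
apply: bij_gmor_is_iso => //; try exact: id_bijective.
by move=> k /= _; rewrite glue_inv_pairing.
Qed.

Lemma unit_nat_iso :
  nat_iso (id_functor (comma_cat S)) (comp_functor forget_functor glue_functor).
Proof.
exists unit_mor, unit_inv; split.
- by move=> a; split; [apply: unit_mor_comma_hom | apply: unit_inv_comma_hom].
- by move=> a; split=> // f []; exists f.
- by move=> a; split=> // f []; exists f.
move=> a b psi _; split=> // f nf.
by rewrite gcomp_mI_notimg // (gcomp_mI_img (phi := unit_mor a) _ (@inj_id _)).
Qed.

Lemma counit_nat_iso :
  nat_iso (comp_functor glue_functor forget_functor) (id_functor (IS_cat S)).
Proof.
exists counit_mor, counit_inv; split.
- by move=> a; split; [apply: counit_mor_IS_hom | apply: counit_inv_IS_hom].
- by move=> a; split=> // f []; exists f.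
- by move=> a; split=> // f []; exists f.
move=> a b psi _; split=> // f nf.
by rewrite gcomp_mI_notimg // (gcomp_mI_img (phi := counit_mor a) _ (@inj_id _)).
Qed.

End Equivalence.

Theorem proposition5p5 (S : finType) : cat_equivalent (comma_cat S) (IS_cat S).
Proof.
exists (glue_functor S), (forget_functor S); split.
- exact: glue_functor_is_functor.
- exact: forget_functor_is_functor.
- exact: unit_nat_iso.
- exact: counit_nat_iso.
Qed.
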